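(* Let $a$ be a positive integer and let $k(a)$ be the least positive integer such that every Abelian group of order $k(a)$ is isomorphic to some product $\mathcal{G}_1\times\cdots\times\mathcal{G}_a$ of Abelian groups with $|\mathcal{G}_i|\geq 4$ for $i=1,\ldots,a$. If $G$ is a finite simple graph of arboricity at most $a$ containing no isolated edges, then ${\chi^\Sigma_g}^\star(G)\leq k(a)$.
   Context: The arboricity of $G$ is the least number of forests into which $E(G)$ can be decomposed; an isolated edge is a connected component isomorphic to $K_2$. For an Abelian group $\mathcal{G}$ with identity $0$ and $f\colon E(G)\to\mathcal{G}$, $w_f(v)=\sum_{u\in N(v)}f(uv)$. ${\chi^\Sigma_g}^\star(G)$ is the least positive integer $k$ such that for every Abelian group $\mathcal{G}$ of order $k$ there exists $f\colon E(G)\to\mathcal{G}\setminus\{0\}$ with $w_f(u)\neq w_f(v)$ for every edge $uv$. *)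

From HB Require Import structures.
From mathcomp Require Import all_boot all_order all_algebra.
Set Implicit Arguments. Unset Strict Implicit. Unset Printing Implicit Defensive.
Import GRing.Theory.
Local Open Scope ring_scope.

Definition simple_graph (T : finType) (e : rel T) : Prop :=
  symmetric e /\ irreflexive e.

Definition forest (T : finType) (F : rel T) : Prop :=
  forall p : seq T, uniq p -> (3 <= size p)%N -> ~~ cycle F p.

(* Arboricity at most a: E(G) decomposes into a forests, given by a colouring
   of the edges with a colours (symmetric on edges) whose colour classes are
   forests. *)
Definition arboricity_le (T : finType) (e : rel T) (a : nat) : Prop :=
  exists col : T -> T -> 'I_a,
    (forall x y, e x y -> col x y = col y x) /\
    forall i : 'I_a, forest [rel x y | e x y && (col x y == i)].

(* An isolated edge: a connected component isomorphic to K2, i.e. an edge uv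
   such that u and v have no neighbours other than each other. *)
Definition isolated_edge (T : finType) (e : rel T) (u v : T) : Prop :=
  e u v /\ (forall w, e u w -> w = v) /\ (forall w, e v w -> w = u).

Definition no_isolated_edges (T : finType) (e : rel T) : Prop :=
  forall u v, ~ isolated_edge e u v.

Definition wdeg (T : finType) (e : rel T) (A : zmodType) (f : T -> T -> A)
  (v : T) : A := \sum_(u | e v u) f v u.

Definition group_sum_good (T : finType) (e : rel T) (k : nat) : Prop :=
  forall A : finZmodType, #|A| = k ->
    exists f : T -> T -> A,
      (forall x y, e x y -> f x y = f y x) /\
      (forall x y, e x y -> f x y != 0) /\
      (forall u v, e u v -> wdeg e f u != wdeg e f v).

Definition is_chi_sigma_star (T : finType) (e : rel T) (c : nat) : Prop :=
  (0 < c)%N /\ group_sum_good e c /\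
  forall j, (0 < j)%N -> group_sum_good e j -> (c <= j)%N.

(* Product of a family of abelian groups indexed by 'I_a, as the dependent
   function type with pointwise addition; an isomorphism from A to the
   product is an additive bijection. *)
Definition iso_to_prod (A : zmodType) (a : nat) (B : 'I_a -> zmodType)
  (phi : A -> forall i, B i) : Prop :=
  bijective phi /\ forall x y, phi (x + y) = (fun i => phi x i + phi y i).

Definition splits_into (a k : nat) : Prop :=
  forall A : finZmodType, #|A| = k ->
    exists B : 'I_a -> finZmodType,
      (forall i, (4 <= #|B i|)%N) /\
      exists phi : A -> forall i, B i, iso_to_prod phi.

Definition is_k_of (a c : nat) : Prop :=
  (0 < c)%N /\ splits_into a c /\
  forall j, (0 < j)%N -> splits_into a j -> (c <= j)%N.

(* Split E(G) into forests F_1, ..., F_a and the group into B_1 x ... x B_a with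
   |B_i| >= 4.  It suffices to find, for each i, a B_i-labelling of G that is
   nonzero on F_i and separates the ends of every edge of F_i by weighted
   degree: the product of these labellings is then nowhere zero and proper.
   For a fixed i, the edges outside F_i are labelled first, so that the ends of
   every isolated edge of F_i get different weights from them (G has no
   isolated edge); these weights then act as an offset g on the forest F_i.
   A forest whose offset already separates its isolated edges is labelled by
   induction: the second vertex p of a longest path has all its neighbours but
   one, q, as leaves; label F_i - p inductively, with the offset of q shifted by
   the future label of pq, then label the star at p, which |B_i| >= 4 always
   allows so that p differs from q and from each of its leaves. *)

From mathcomp Require Import all_boot all_order all_algebra.
From mathcomp Require Import boolp.
Set Implicit Arguments. Unset Strict Implicit. Unset Printing Implicit Defensive.
Import GRing.Theory.
Local Open Scope ring_scope.

Definition distinguishing (G : zmodType) (T : finType) (e F : rel T)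
    (g : T -> G) (f : T -> T -> G) :=
  [/\ forall x y, e x y -> f x y = f y x,
      forall x y, F x y -> f x y != 0 &
      forall u v, F u v -> g u + wdeg e f u != g v + wdeg e f v].

Section PendantStar.
Variables (T : finType) (F : rel T).
Hypotheses (Fsym : symmetric F) (Firr : irreflexive F) (Fforest : forest F).

Definition simple_path (x : T) (s : seq T) := uniq (x :: s) && path F x s.

Definition longest_path (x : T) (s : seq T) :=
  simple_path x s /\ forall x' s', simple_path x' s' -> (size s' <= size s)%N.

Lemma simple_path_size x s : simple_path x s -> (size s < #|T|)%N.
Proof. by case/andP=> uxs _; apply/card_geqP; exists (x :: s). Qed.

Lemma simple_path_no_chord x y t w :
  simple_path x (y :: t) -> w \in t -> ~~ F w x.
Proof.
move=> pxyt wt; case/splitPr: wt pxyt => t1 t2.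
rewrite /simple_path -cat_rcons -!cat_cons cat_uniq cat_path.
move=> /andP[/andP[uxyt1w _] /andP[pxyt1w _]].
apply/negP=> Fwx.
have := Fforest uxyt1w; rewrite /= size_rcons => /(_ isT) /negP; apply.
by rewrite /cycle /= rcons_path last_rcons Fwx andbT.
Qed.

Lemma exists_longest_path x s :
  simple_path x s -> exists x' s', longest_path x' s' /\ (size s <= size s')%N.
Proof.
move=> pxs; pose P n := `[< exists x' s', simple_path x' s' /\ size s' = n >].
have exP : exists n, P n by exists (size s); apply/asboolP; exists x, s.
have boundP n : P n -> (n <= #|T|)%N.
  by move=> /asboolP[x' [s' [ps' <-]]]; exact/ltnW/(simple_path_size ps').
case: (ex_maxnP exP boundP) => n /asboolP[x' [s' [ps' sz]]] maxn.
exists x', s'; split; last by rewrite sz maxn //; apply/asboolP; exists x, s.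
by split=> // x'' s'' ps''; rewrite sz maxn //; apply/asboolP; exists x'', s''.
Qed.

Lemma longest_path_start x y t w : longest_path x (y :: t) -> F x w -> w = y.
Proof.
move=> [pxyt maxp] Fxw; have [wxyt | wxyt] := boolP (w \in x :: y :: t).
  rewrite !inE in wxyt; case/or3P: wxyt => [/eqP wx | /eqP // | wt].
    by move: Fxw; rewrite wx Firr.
  by move: (simple_path_no_chord pxyt wt); rewrite Fsym Fxw.
suff /maxp : simple_path w (x :: y :: t) by rewrite /= ltnn.
by case/andP: pxyt => uxyt pxyt; rewrite /simple_path cons_uniq wxyt uxyt /= Fsym Fxw.
Qed.

Lemma pendant_star : (exists a b c, [/\ F a b, F b c & a != c]) ->
  exists p q l, [/\ F p q, F p l, l != q &
    forall w, F p w -> w != q -> forall z, F w z -> z = p].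
Proof.
move=> [a [b [c [Fab Fbc ac]]]].
have pabc : simple_path a [:: b; c].
  have ab : a != b by apply: contraTneq Fab => ->; rewrite Firr.
  have bc : b != c by apply: contraTneq Fbc => ->; rewrite Firr.
  by rewrite /simple_path /= Fab Fbc !inE negb_or ab ac bc.
have [x [[|y [|q t]] [lxs /= sz]]] := exists_longest_path pabc; rewrite ?ltn0 // in sz.
have [/andP[uxyqt pxyqt] _] := lxs.
have /andP[xyqt uyqt] : (x \notin [:: y, q & t]) && uniq [:: y, q & t] by [].
have /and3P[Fxy Fyq pqt] : [&& F x y, F y q & path F q t] by [].
exists y, q, x; split=> //; first by rewrite Fsym.
  by apply: contraNneq xyqt => ->; rewrite !inE eqxx orbT.
move=> w Fyw wq z Fwz.
have pyqt : simple_path y (q :: t) by rewrite /simple_path uyqt /= Fyq.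
have wt : w \notin t by apply: contraTN Fyw => wt; rewrite Fsym (simple_path_no_chord pyqt wt).
apply: (@longest_path_start w y (q :: t) z _ Fwz); split; last by case: lxs.
have wy : w != y by apply: contraTneq Fyw => ->; rewrite Firr.
rewrite /simple_path cons_uniq uyqt /= Fsym Fyw Fyq pqt.
by rewrite !inE (negbTE wy) (negbTE wq) (negbTE wt).
Qed.

End PendantStar.

Lemma isolated_edge_sym (T : finType) (F : rel T) u v :
  symmetric F -> isolated_edge F u v -> isolated_edge F v u.
Proof. by move=> Fsym [Fuv [Hu Hv]]; split; [rewrite Fsym | split]. Qed.

Lemma isolated_edge_uniq (T : finType) (F : rel T) u v v' :
  isolated_edge F u v -> isolated_edge F u v' -> v' = v.
Proof. by move=> [_ [Hu _]] [Fuv' _]; apply: Hu. Qed.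

Section StarLabelling.
Variables (G : finZmodType) (T : finType).

Lemma exists_notin (s : seq G) : (size s < #|G|)%N -> exists v, v \notin s.
Proof.
case: (pickP [predC s]) => [v vs _ | all_in]; first by exists v.
rewrite ltnNge (leq_trans _ (card_size s)) //; apply: subset_leq_card.
by apply/subsetP => v _; move/negbFE: (all_in v).
Qed.

Lemma exists_nonzero_mulrn_neq k (c : G) :
  (2 < #|G|)%N -> c != 0 -> exists2 v : G, v != 0 & v *+ k != c.
Proof.
move=> G_gt2 c0; have [v1] := exists_notin (s := [:: 0]) (ltnW G_gt2); rewrite inE => v10.
have [v2] := exists_notin (s := [:: 0; - v1]) G_gt2; rewrite !inE negb_or => /andP[v20 v21].
have [kv1 | ?] := eqVneq (v1 *+ k) c; last by exists v1.
have [kv2 | ?] := eqVneq (v2 *+ k) c; last by exists v2.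
exists (v1 + v2); first by rewrite addrC addr_eq0.
rewrite mulrnDl kv1 kv2; apply: contra c0 => /eqP.
by rewrite -{3}[c]addr0 => /addrI ->.
Qed.

Hypothesis G_gt3 : (3 < #|G|)%N.

Definition star_labelling (L : {set T}) (a : T -> G) (B s : G) (x : T -> G) :=
  (forall w, w \in L -> x w != 0 /\ a w + x w != s) /\ B + \sum_(w in L) x w = s.

Lemma star_labelling_at_leaf (L : {set T}) a B l1 l2 :
  l1 \in L -> l2 \in L -> l1 != l2 -> exists x, star_labelling L a B (a l1) x.
Proof.
move=> l1L l2L l12.
have /fin_all_exists[x0 x0P] : forall w, exists v, v \notin [:: 0; a l1 - a w].
  by move=> w; apply: exists_notin; apply: ltnW.
(* Aiming the centre at a l1 turns the constraint at l1 into x l1 != 0, so the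
   label y of l2, which fixes x l1, only has three values to avoid. *)
set R := \sum_(w in L :\ l1 :\ l2) x0 w.
have [y] := exists_notin (s := [:: 0; a l1 - a l2; a l1 - B - R]) G_gt3.
rewrite !inE !negb_or => /and3P[y0 y12 yR].
pose x1 := a l1 - B - R - y; pose x w := if w == l1 then x1 else if w == l2 then y else x0 w.
have x1_neq0 : x1 != 0 by rewrite subr_eq0 eq_sym.
exists x; split.
  move=> w wL; rewrite /x; have [-> | wl1] := eqVneq w l1.
    by rewrite -{2}[a l1]addr0 (inj_eq (addrI _)) x1_neq0.
  have [-> | wl2] := eqVneq w l2; first by rewrite y0 addrC eq_sym -subr_eq eq_sym.
  have := x0P w; rewrite !inE negb_or => /andP[-> x0w].
  by rewrite addrC eq_sym -subr_eq eq_sym.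
have l21 : l2 != l1 by rewrite eq_sym.
have l2L1 : l2 \in L :\ l1 by rewrite in_setD1 l21.
rewrite (big_setD1 l1) // (big_setD1 l2) //= /x eqxx (negbTE l21) eqxx.
rewrite (eq_bigr x0); last by move=> w; rewrite !in_setD1 => /and3P[/negbTE-> /negbTE->].
by rewrite addrA subrK subrK addrC subrK.
Qed.

Lemma star_labelling_uniform (L : {set T}) a B w0 P :
  w0 \in L -> B != a w0 -> {in L, forall w, a w = a w0} ->
  exists s x, star_labelling L a B s x /\ s != P.
Proof.
move=> w0L Bw0 aL; set k := #|L :\ w0|.
have c0 : a w0 - B != 0 by rewrite subr_eq0 eq_sym.
have [v v0 vk] := exists_nonzero_mulrn_neq k (ltnW G_gt3) c0.
have [u] :=
  exists_notin (s := [:: 0; a w0 + v - (B + v *+ k); P - (B + v *+ k)]) G_gt3.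
rewrite !inE !negb_or => /and3P[u0 uv uP].
(* With x = u at w0 and v elsewhere, v *+ k != a w0 - B protects the leaf w0
   for every u. *)
pose x w := if w == w0 then u else v.
have sum_x : \sum_(w in L) x w = u + v *+ k.
  rewrite (big_setD1 w0) // /x eqxx (eq_bigr (fun=> v)) ?sumr_const //.
  by move=> w; rewrite in_setD1 => /andP[/negbTE-> _].
exists (B + (u + v *+ k)), x; split; last by rewrite addrCA eq_sym -subr_eq eq_sym.
split; last by rewrite sum_x.
move=> w wL; rewrite /x (aL w wL); have [_ | ww0] := eqVneq w w0; split=> //.
  by rewrite addrCA [a w0 + _]addrC (inj_eq (addrI _)) addrC -subr_eq eq_sym.
by rewrite addrCA -subr_eq eq_sym.
Qed.

Lemma star_labelling_avoid (L : {set T}) a B w0 P :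
  w0 \in L -> B != a w0 -> exists s x, star_labelling L a B s x /\ s != P.
Proof.
move=> w0L Bw0.
case: (pickP [pred w | (w \in L) && (a w != a w0)]) => [w1 /andP[w1L aw10] | aL]; last first.
  apply: star_labelling_uniform Bw0 _ => // w wL.
  by apply/eqP; apply: contraFT (aL w) => aw; rewrite /= wL.
have w10 : w1 != w0 by apply: contraNneq aw10 => ->.
have [-> | Pw0] := eqVneq P (a w0).
  by have [x xP] := star_labelling_at_leaf a B w1L w0L w10; exists (a w1), x.
have w01 : w0 != w1 by rewrite eq_sym.
have [x xP] := star_labelling_at_leaf a B w0L w1L w01.
by exists (a w0), x; rewrite eq_sym.
Qed.

End StarLabelling.

Section ForestLabelling.
Variables (G : finZmodType) (T : finType).

Definition del_vertex (F : rel T) (p : T) := [rel x y | [&& F x y, x != p & y != p]].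

Definition non_isolated (F : rel T) := [set x | [exists y, F x y]].

Definition glue (p : T) (h : T -> G) (f : T -> T -> G) (u v : T) :=
  if u == p then h v else if v == p then h u else f u v.

Definition shift_at (q : T) (y : G) (g : T -> G) (v : T) :=
  if v == q then g v + y else g v.

Lemma forest_sub (F F' : rel T) : subrel F' F -> forest F -> forest F'.
Proof.
move=> F'F Fforest [//|x s] uxs sz; apply: contra (Fforest _ uxs sz).
exact: sub_path.
Qed.

Lemma del_vertex_sym (F : rel T) p : symmetric F -> symmetric (del_vertex F p).
Proof. by move=> Fsym x y; rewrite /= Fsym [(x != p) && _]andbC. Qed.

Lemma del_vertex_irr (F : rel T) p : irreflexive F -> irreflexive (del_vertex F p).
Proof. by move=> Firr x; rewrite /= Firr. Qed.

Lemma del_vertex_forest (F : rel T) p : forest F -> forest (del_vertex F p).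
Proof. by apply: forest_sub => x y /andP[]. Qed.

Lemma card_non_isolated_del (F : rel T) p q :
  F p q -> (#|non_isolated (del_vertex F p)| < #|non_isolated F|)%N.
Proof.
move=> Fpq; apply: proper_card; apply/properP; split.
  by apply/subsetP => x; rewrite !inE => /existsP[y /andP[Fxy _]]; apply/existsP; exists y.
exists p; first by rewrite inE; apply/existsP; exists q.
by rewrite inE; apply/existsP => -[y /and3P[_ /eqP]].
Qed.

Lemma wdeg_unique_neighbour (F : rel T) (f : T -> T -> G) v u :
  (forall b, F v b = (b == u)) -> wdeg F f v = f v u.
Proof. by move=> Fv; rewrite /wdeg (eq_bigl _ _ Fv) big_pred1_eq. Qed.

Lemma wdeg_glue_at (F : rel T) p h (f : T -> T -> G) :
  wdeg F (glue p h f) p = \sum_(b | F p b) h b.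
Proof. by apply: eq_bigr => b _; rewrite /glue eqxx. Qed.

Lemma wdeg_glue_off (F : rel T) p h (f : T -> T -> G) v : v != p ->
  wdeg F (glue p h f) v = (if F v p then h v else 0) + wdeg (del_vertex F p) f v.
Proof.
move=> vp; rewrite /wdeg (bigID (pred1 p)) /=; congr (_ + _).
  case: ifP => Fvp.
    rewrite (eq_bigl (pred1 p)) ?big_pred1_eq; first by rewrite /glue (negbTE vp) eqxx.
    by move=> b /=; case: eqVneq => [-> | _]; rewrite ?andbT ?andbF.
  by apply: big_pred0 => b; apply/andP => -[Fvb /eqP bp]; rewrite -bp Fvb in Fvp.
apply: eq_big => [b | b /andP[_ bp]]; first by rewrite /= vp.
by rewrite /glue (negbTE vp) (negbTE bp).
Qed.

Lemma matching_labelling (F : rel T) (g : T -> G) : (1 < #|G|)%N -> symmetric F ->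
  (forall u v w, F u v -> F u w -> v = w) ->
  (forall u v, isolated_edge F u v -> g u != g v) -> exists f, distinguishing F F g f.
Proof.
move=> G_gt1 Fsym Fmatch Fiso.
have [c] := exists_notin (s := [:: 0]) G_gt1; rewrite inE => c0.
have wdeg_c u v : F u v -> wdeg F (fun _ _ => c) u = c.
  move=> Fuv; apply: wdeg_unique_neighbour => b.
  by apply/idP/eqP => [/(Fmatch _ _ _ Fuv) <- | ->].
exists (fun _ _ => c); split=> // u v Fuv; have Fvu : F v u by rewrite Fsym.
rewrite (wdeg_c u v Fuv) (wdeg_c v u Fvu) (inj_eq (addIr _)); apply: Fiso.
by split=> //; split=> w Fw; apply/esym; [exact: Fmatch Fuv Fw | exact: Fmatch Fvu Fw].
Qed.

Section PendantGlue.
Variables (F : rel T) (p q : T).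
Hypotheses (Fsym : symmetric F) (Firr : irreflexive F) (Fpq : F p q).
Hypothesis leaves : forall w, F p w -> w != q -> forall z, F w z -> z = p.

Definition pendant_leaves := [set w | F p w & w != q].

Let F' := del_vertex F p.

Lemma del_vertex_isolated_shift (g : T -> G) y :
  (forall v, isolated_edge F' q v -> g q + y != g v) ->
  (forall u v, isolated_edge F u v -> g u != g v) ->
  forall u v, isolated_edge F' u v -> shift_at q y g u != shift_at q y g v.
Proof.
move=> yq Fiso.
suff noq u v : isolated_edge F' u v -> u != q -> shift_at q y g u != shift_at q y g v.
  move=> u v uv; have [uq | ] := eqVneq u q; last exact: noq.
  rewrite eq_sym; apply: noq (isolated_edge_sym (del_vertex_sym _ Fsym) uv) _.
  by have [F'uv _] := uv; apply: contraTneq F'uv => ->; rewrite uq /= Firr.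
move=> uv uq; have [/and3P[Fuv up vp] [Hu Hv]] := uv.
have [vq | vq] := eqVneq v q.
  subst v; rewrite /shift_at eqxx (negbTE uq) eq_sym; apply: yq.
  exact: isolated_edge_sym (del_vertex_sym _ Fsym) uv.
rewrite /shift_at (negbTE uq) (negbTE vq).
have neighbour_p w z : F w z -> z != p -> F w p -> w = q.
  by move=> Fwz zp Fwp; apply: contraNeq zp => wq; rewrite (leaves _ wq Fwz) // Fsym.
apply: Fiso; split=> //; split=> w Fw; have [wp | wp] := eqVneq w p.
- by rewrite wp in Fw; move/eqP: uq; rewrite (neighbour_p u v).
- by apply: Hu; rewrite /= Fw up.
- by rewrite wp in Fw; move/eqP: vq; rewrite (neighbour_p v u) // Fsym.
- by apply: Hv; rewrite /= Fw vp.
Qed.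

Lemma glue_pendant_star (g : T -> G) y f' s x :
  y != 0 -> distinguishing F' F' (shift_at q y g) f' ->
  star_labelling pendant_leaves g (g p + y) s x ->
  s != shift_at q y g q + wdeg F' f' q ->
  distinguishing F F g (glue p (fun w => if w == q then y else x w) f').
Proof.
set h := fun w => _; set f := glue p h f'.
move=> y0 [f'sym f'0 f'dist] [xP xsum] sP.
have qp : q != p by apply: contraTneq Fpq => ->; rewrite Firr.
have val_p : g p + wdeg F f p = s.
  rewrite wdeg_glue_at (bigD1 q) //= {1}/h eqxx addrA -xsum; congr (_ + _).
  apply: eq_big => [w | w /andP[_ /negbTE wq]]; first by rewrite inE.
  by rewrite /h wq.
have val_leaf w : w \in pendant_leaves -> g w + wdeg F f w = g w + x w.
  rewrite inE => /andP[Fpw wq].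
  have wp : w != p by apply: contraTneq Fpw => ->; rewrite Firr.
  rewrite (@wdeg_unique_neighbour _ _ _ p) /f /glue ?(negbTE wp) ?eqxx /h ?(negbTE wq) //.
  by move=> b; apply/idP/eqP => [/(leaves Fpw wq) | ->]; rewrite // Fsym.
have val_other v : v != p -> v \notin pendant_leaves ->
    g v + wdeg F f v = shift_at q y g v + wdeg F' f' v.
  move=> vp vL; rewrite wdeg_glue_off // /shift_at; have [-> | vq] := eqVneq v q.
    by rewrite Fsym Fpq /h eqxx addrA.
  by rewrite ifF ?add0r //; apply: contraNF vL => Fvp; rewrite inE Fsym Fvp vq.
have dist_p v : F p v -> g p + wdeg F f p != g v + wdeg F f v.
  move=> Fpv; rewrite val_p; have [-> | vq] := eqVneq v q.
    by rewrite val_other // inE negb_and eqxx orbT.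
  have vL : v \in pendant_leaves by rewrite inE Fpv vq.
  by rewrite val_leaf // eq_sym; have [] := xP v vL.
have leaf_or_p u v : F u v -> u \in pendant_leaves -> v = p.
  by rewrite inE => Fuv /andP[Fpu uq]; apply: leaves Fpu uq _ Fuv.
have h_neq0 v : F p v -> h v != 0.
  rewrite /h => Fpv; have [// | vq] := eqVneq v q.
  by have [] := xP v; rewrite // inE Fpv vq.
split.
- move=> u v Fuv; rewrite /f /glue.
  have [-> | up] := eqVneq u p; have [vp | vp] := eqVneq v p; rewrite ?vp //.
  by apply: f'sym; rewrite /= Fuv up vp.
- move=> u v Fuv; rewrite /f /glue.
  have [up | up] := eqVneq u p; first by apply: h_neq0; rewrite -up.
  have [vp | vp] := eqVneq v p; first by apply: h_neq0; rewrite -vp Fsym.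
  by apply: f'0; rewrite /= Fuv up vp.
- move=> u v Fuv.
  have [up | up] := eqVneq u p; first by rewrite up in Fuv *; apply: dist_p.
  have [vp | vp] := eqVneq v p; first by rewrite vp eq_sym dist_p // -vp Fsym.
  have uL : u \notin pendant_leaves by apply: contraNN vp => /(leaf_or_p _ _ Fuv) ->.
  have vL : v \notin pendant_leaves.
    by apply: contraNN up => /(leaf_or_p v u); rewrite Fsym => ->.
  by rewrite !val_other //; apply: f'dist; rewrite /= Fuv up vp.
Qed.

End PendantGlue.

Hypothesis G_gt3 : (3 < #|G|)%N.

Lemma forest_labelling (F : rel T) (g : T -> G) :
  symmetric F -> irreflexive F -> forest F ->
  (forall u v, isolated_edge F u v -> g u != g v) -> exists f, distinguishing F F g f.
Proof.
have [n] := ubnP #|non_isolated F|; elim: n F g => // n IH F g ltFn Fsym Firr Fforest Fiso.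
have [path2 | no_path2] := pselect (exists a b c, [/\ F a b, F b c & a != c]); last first.
  apply: matching_labelling => // [|u v w Fuv Fuw]; first exact: ltn_trans G_gt3.
  by apply/eqP; apply/contraT => vw; case: no_path2; exists v, u, w; rewrite Fsym.
have [p [q [l [Fpq Fpl lq leaves]]]] := pendant_star Fsym Firr Fforest path2.
set F' := del_vertex F p; set z := odflt q [pick z | F q z && (z != p)].
(* y, the future label of pq, must also keep the ends of a possible isolated edge
   qz of F - p apart and make the centre weight g p + y differ from g l. *)
have [y] := exists_notin (s := [:: 0; g l - g p; g z - g q]) G_gt3.
rewrite !inE !negb_or => /and3P[y0 yl yz].
have yq v : isolated_edge F' q v -> g q + y != g v.
  move=> [/and3P[Fqv qp vp] [Hq _]]; move: yz; rewrite /z.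
  case: pickP => [z0 /andP[Fqz0 z0p] | /(_ v)]; last by rewrite Fqv vp.
  have <- : z0 = v by apply: Hq; rewrite /= Fqz0 qp z0p.
  by move=> yz0; rewrite addrC eq_sym -subr_eq eq_sym.
have [f' f'P] := IH F' (shift_at q y g)
  (leq_trans (card_non_isolated_del Fpq) (ltnSE ltFn)) (del_vertex_sym _ Fsym)
  (del_vertex_irr _ Firr) (del_vertex_forest _ Fforest)
  (del_vertex_isolated_shift Fsym Firr leaves yq Fiso).
have lL : l \in pendant_leaves F p q by rewrite inE Fpl lq.
have yl' : g p + y != g l by rewrite addrC eq_sym -subr_eq eq_sym.
have [s [x [xP sP]]] :=
  star_labelling_avoid G_gt3 (shift_at q y g q + wdeg F' f' q) lL yl'.
exists (glue p (fun w => if w == q then y else x w) f').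
exact: (glue_pendant_star Fsym Firr Fpq leaves y0 f'P xP sP).
Qed.

End ForestLabelling.

Section IsolatedEdges.
Variables (G : finZmodType) (T : finType) (F H : rel T) (g : T -> G).
Hypotheses (Fsym : symmetric F) (Firr : irreflexive F).
Hypotheses (Hsym : symmetric H) (Hirr : irreflexive H).

Definition bump (c : T -> T -> G) (r w : T) (d : G) (x y : T) :=
  c x y + d *+ ((x == r) && (y == w) || (x == w) && (y == r)).

Definition weight (c : T -> T -> G) (u : T) := g u + wdeg H c u.

Definition clashing (c : T -> T -> G) :=
  [set u | `[< exists v, isolated_edge F u v /\ weight c u = weight c v >]].

Lemma sum_mulrn_eq (P : pred T) (d : G) w :
  \sum_(y | P y) d *+ (y == w) = d *+ P w.
Proof.
rewrite big_mkcond (bigD1 w) //= eqxx big1 ?addr0 => [|y /negbTE ->]; last by case: (P y).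
by case: (P w).
Qed.

Lemma wdeg_bump c r w d x : H r w ->
  wdeg H (bump c r w d) x = wdeg H c x + d *+ (x == r) + d *+ (x == w).
Proof.
move=> Hrw; have rw : r != w by apply: contraTneq Hrw => ->; rewrite Hirr.
rewrite /wdeg big_split /= -addrA; congr (_ + _).
have [-> | xr] := eqVneq x r.
  rewrite (negbTE rw) addr0 (eq_bigr (fun y => d *+ (y == w))) ?sum_mulrn_eq ?Hrw //.
  by move=> y _; rewrite andTb andFb orbF.
have [-> | xw] := eqVneq x w.
  rewrite add0r (eq_bigr (fun y => d *+ (y == r))) ?sum_mulrn_eq 1?Hsym ?Hrw //.
by rewrite addr0 big1 // => y _; rewrite (negbTE xr) (negbTE xw).
Qed.

Hypothesis G_gt2 : (2 < #|G|)%N.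

Lemma clashing_bump c r o w : (forall x y, c x y = c y x) ->
  isolated_edge F r o -> weight c r = weight c o -> H r w -> w != o ->
  exists c', (forall x y, c' x y = c' y x) /\ clashing c' \proper clashing c.
Proof.
move=> csym ro eq_ro Hrw wo.
have [b bP] : exists b, forall w', isolated_edge F w w' -> b = weight c w' - weight c w.
  have [[w' ww'] | none] := pselect (exists w', isolated_edge F w w').
    by exists (weight c w' - weight c w) => w'' /(isolated_edge_uniq ww') ->.
  by exists 0 => w' ww'; case: none; exists w'.
have [d] := exists_notin (s := [:: weight c o - weight c r; b]) G_gt2.
rewrite !inE negb_or => /andP[d_ro d_b].
set c' := bump c r w d.
have weight_c' x : weight c' x = weight c x + d *+ (x == r) + d *+ (x == w).
  by rewrite /weight wdeg_bump // !addrA.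
have o_r : o != r by case: ro => Fro _; apply: contraTneq Fro => ->; rewrite Firr.
have r_w : r != w by apply: contraTneq Hrw => ->; rewrite Hirr.
have o_w : o != w by rewrite eq_sym.
have fixed x x' : isolated_edge F x x' -> x \in [:: r; w] -> weight c' x != weight c' x'.
  move=> xx'; rewrite !inE => /orP[/eqP xr | /eqP xw]; subst x.
    rewrite (isolated_edge_uniq ro xx') !weight_c' eqxx.
    rewrite (negbTE o_r) (negbTE r_w) (negbTE o_w).
    by rewrite mulr1n !mulr0n !addr0 addrC eq_sym -subr_eq eq_sym.
  have x'_r : x' != r.
    apply: contraNneq wo => x'r; rewrite x'r in xx'.
    by apply/eqP; apply: isolated_edge_uniq ro (isolated_edge_sym Fsym xx').
  have x'_w : x' != w by case: xx' => Fwx' _; apply: contraTneq Fwx' => ->; rewrite Firr.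
  rewrite !weight_c' eqxx (eq_sym w) (negbTE r_w) (negbTE x'_r) (negbTE x'_w).
  by rewrite mulr1n !mulr0n !addr0 addrC eq_sym -subr_eq eq_sym -(bP _ xx').
exists c'; split.
  by move=> x y; rewrite /c' /bump csym orbC andbC [(x == r) && _]andbC.
apply/properP; split; last first.
  exists r; rewrite inE; apply/asboolP; first by exists o.
  by move=> [o' [ro' /eqP]]; apply/negP/fixed; rewrite ?inE ?eqxx.
apply/subsetP => x; rewrite !inE => /asboolP[x' [xx' eq_xx']]; apply/asboolP; exists x'.
have [x_rw x'_rw] : x \notin [:: r; w] /\ x' \notin [:: r; w].
  split; apply/negP => /fixed; [move/(_ _ xx') | move/(_ _ (isolated_edge_sym Fsym xx'))];
  by rewrite eq_xx' eqxx.
move: x_rw x'_rw eq_xx'; rewrite !inE !negb_or !weight_c' => /andP[/negbTE-> /negbTE->].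
by move=> /andP[/negbTE-> /negbTE->]; rewrite !mulr0n !addr0.
Qed.

Hypothesis escape : forall u v, isolated_edge F u v ->
  (exists2 w, H u w & w != v) \/ (exists2 w, H v w & w != u).

Lemma isolated_edge_offsets : exists c : T -> T -> G,
  (forall x y, c x y = c y x) /\ forall u v, isolated_edge F u v -> weight c u != weight c v.
Proof.
suff [c [csym clash0]] : exists c : T -> T -> G,
    (forall x y, c x y = c y x) /\ clashing c = set0.
  exists c; split=> // u v uv; apply/eqP => eq_uv.
  suff : u \in clashing c by rewrite clash0 inE.
  by rewrite inE; apply/asboolP; exists v.
pose c0 (x y : T) : G := 0; have : forall x y, c0 x y = c0 y x by [].
have [n] := ubnP #|clashing c0|; elim: n c0 => // n IH c lt_cn csym.
have [clash0 | [u]] := set_0Vmem (clashing c); first by exists c.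
rewrite inE => /asboolP[v [uv eq_uv]].
have [c' [c'sym c'c]] :
    exists c', (forall x y, c' x y = c' y x) /\ clashing c' \proper clashing c.
  have [[w Huw wv] | [w Hvw wu]] := escape uv.
    exact: clashing_bump csym uv eq_uv Huw wv.
  exact: clashing_bump csym (isolated_edge_sym Fsym uv) (esym eq_uv) Hvw wu.
exact: IH c' (leq_trans (proper_card c'c) (ltnSE lt_cn)) c'sym.
Qed.

End IsolatedEdges.

Section ColourClass.
Variables (G : finZmodType) (T : finType) (e F : rel T).
Hypotheses (esym : symmetric e) (eirr : irreflexive e) (e_no_iso : no_isolated_edges e).
Hypotheses (Fe : subrel F e) (Fsym : symmetric F) (Fforest : forest F).
Hypothesis G_gt3 : (3 < #|G|)%N.

Let H := [rel x y | e x y && ~~ F x y].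

Lemma wdeg_split (f c : T -> T -> G) v :
  wdeg e (fun x y => if F x y then f x y else c x y) v = wdeg F f v + wdeg H c v.
Proof.
rewrite /wdeg (bigID (F v)) /=; congr (_ + _).
  by apply: eq_big => [b | b /andP[_ ->]] //; apply/andP/idP => [[] | Fvb] //; rewrite Fe.
by apply: eq_bigr => b /andP[_ /negbTE ->].
Qed.

Lemma isolated_edge_escape u v : isolated_edge F u v ->
  (exists2 w, H u w & w != v) \/ (exists2 w, H v w & w != u).
Proof.
move=> [Fuv [Hu Hv]].
have [//| no_u] := pselect (exists2 w, H u w & w != v); first by left.
have [//| no_v] := pselect (exists2 w, H v w & w != u); first by right.
case: (@e_no_iso u v); split; first exact: Fe.
split=> w ew; apply/eqP/contraT => wn.
  by case: no_u; exists w => //=; rewrite ew; apply: contra wn => /Hu/eqP.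
by case: no_v; exists w => //=; rewrite ew; apply: contra wn => /Hv/eqP.
Qed.

Lemma colour_class_labelling (g : T -> G) : exists Phi, distinguishing e F g Phi.
Proof.
have Firr : irreflexive F by move=> x; apply/negbTE/negP => /Fe; rewrite eirr.
have Hsym : symmetric H by move=> x y; rewrite /= esym Fsym.
have Hirr : irreflexive H by move=> x; rewrite /= eirr.
have [c [csym c_sep]] :=
  isolated_edge_offsets g Fsym Firr Hsym Hirr (ltnW G_gt3) isolated_edge_escape.
have [f [fsym f0 fdist]] := forest_labelling G_gt3 Fsym Firr Fforest c_sep.
exists (fun x y => if F x y then f x y else c x y); split.
- by move=> x y _; rewrite Fsym; case: ifP => // Fyx; rewrite fsym // Fsym.
- by move=> x y Fxy; rewrite Fxy f0.
- move=> u v Fuv; rewrite !wdeg_split !addrA ![_ + wdeg F f _ + _]addrAC.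
  exact: fdist.
Qed.

End ColourClass.

Lemma product_labelling (T : finType) (e : rel T) (A : zmodType) a
    (B : 'I_a -> zmodType) (phi : A -> forall i, B i) (F : 'I_a -> rel T) :
  iso_to_prod phi -> (forall x y, e x y -> exists i, F i x y) ->
  (forall i, exists Phi : T -> T -> B i, distinguishing e (F i) (fun=> 0) Phi) ->
  exists f : T -> T -> A, distinguishing e e (fun=> 0) f.
Proof.
move=> [[psi phiK psiK] phiD] cover /fin_all_exists[Phi PhiP].
pose f x y := psi (fun i => Phi i x y).
have phi_f x y : phi (f x y) = fun i => Phi i x y by rewrite psiK.
have phiD_i i : {morph phi^~ i : x y / x + y} by move=> x y; rewrite phiD.
have phi0 i : phi 0 i = 0 by apply: (addrI (phi 0 i)); rewrite -phiD_i !addr0.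
have phi_wdeg i v : phi (wdeg e f v) i = wdeg e (Phi i) v.
  rewrite /wdeg (big_morph _ (phiD_i i) (phi0 i)).
  by apply: eq_bigr => b _; rewrite phi_f.
exists f; split.
- move=> x y exy; rewrite /f; congr psi; apply: functional_extensionality_dep => i.
  by have [Phisym _ _] := PhiP i; apply: Phisym.
- move=> x y exy; have [i Fixy] := cover x y exy; have [_ Phi0 _] := PhiP i.
  apply: contraNneq (Phi0 _ _ Fixy) => fxy0.
  by rewrite -(phi0 i) -fxy0 phi_f.
- move=> u v euv; have [i Fiuv] := cover u v euv; have [_ _ Phidist] := PhiP i.
  apply: contra (Phidist _ _ Fiuv) => /eqP/(congr1 (phi^~ i)).
  by rewrite !add0r !phi_wdeg => ->.
Qed.

Lemma splits_into_group_sum_good a k (T : finType) (e : rel T) :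
  simple_graph e -> arboricity_le e a -> no_isolated_edges e ->
  splits_into a k -> group_sum_good e k.
Proof.
move=> [esym eirr] [col [colsym forests]] e_no_iso splits A cardA.
have [B [B_gt3 [phi phiP]]] := splits A cardA.
pose F i := [rel x y | e x y && (col x y == i)].
have Fe i : subrel (F i) e by move=> x y /andP[].
have Fsym i : symmetric (F i).
  by move=> x y /=; rewrite esym; case eyx: (e y x); rewrite //= colsym // esym.
have cover x y : e x y -> exists i, F i x y.
  by move=> exy; exists (col x y); rewrite /= exy eqxx.
have colour_labelling i := colour_class_labelling
  esym eirr e_no_iso (Fe i) (Fsym i) (forests i) (B_gt3 i) (fun=> 0).
have [f [fsym f0 fdist]] := product_labelling phiP cover colour_labelling.
by exists f; do 2!split=> //; move=> u v euv; move: (fdist u v euv); rewrite !add0r.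
Qed.

Theorem corollary6 (a : nat) (ka : nat) (T : finType) (e : rel T) :
  (0 < a)%N -> is_k_of a ka ->
  simple_graph e -> arboricity_le e a -> no_isolated_edges e ->
  exists c, is_chi_sigma_star e c /\ (c <= ka)%N.
Proof.
move=> _ [ka_gt0 [ka_splits _]] e_simple e_arb e_no_iso.
have good_ka := splits_into_group_sum_good e_simple e_arb e_no_iso ka_splits.
pose P n := (0 < n)%N && `[< group_sum_good e n >].
have P_ka : P ka by rewrite /P ka_gt0; apply/asboolP.
case: (ex_minnP (ex_intro P ka P_ka)) => c /andP[c_gt0 /asboolP good_c] c_min.
exists c; split; last exact: c_min.
by do 2!split=> //; move=> j j_gt0 good_j; apply: c_min; rewrite /P j_gt0; apply/asboolP.
Qed.
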